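(* With $Y^+$ as in the context, there is an isomorphism of $\mathbb{Z}$-modules $\mathrm{BF}(Y^+)\cong\mathbb{Z}^{\frac{p-3}{2}}\oplus\mathbb{Z}/p\mathbb{Z}$.
   Context: Let $p$ be an odd prime, $\Delta=\mathrm{Gal}(\mathbb{Q}(\zeta_p)/\mathbb{Q})$, $\sigma_i:\zeta_p\mapsto\zeta_p^i$, $j=\sigma_{-1}$. Digraphs have incidence $e\mapsto(o(e),t(e))$; the derived digraph $X(G,\alpha)$ of $\alpha:E_X\to G$ has vertices $V_X\times G$, edges $E_X\times G$, $o(e,\sigma)=(o(e),\sigma)$, $t(e,\sigma)=(t(e),\sigma\alpha(e))$, with $G$ acting by left multiplication on the second coordinate. $X$ is the bouquet with $\frac{p-1}{2}p+1$ loops $e_0$, $e_{i,k}$ ($1\le k\le i\le p-1$), $\alpha(e_0)=\sigma_1$, $\alpha(e_{i,k})=\sigma_i^{-1}$, $Y=X(\Delta,\alpha)$, and $Y^+=Y_{\langle j\rangle}$ is the quotient digraph by $\langle j\rangle$. For a finite digraph $W$, $\mathcal{A}_W(w)=\sum_{o(\varepsilon)=w}t(\varepsilon)$ on $\mathbb{Z}V_W$ and $\mathrm{BF}(W)=\mathrm{coker}(\mathcal{I}-\mathcal{A}_W)$. *)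

From HB Require Import structures.
From mathcomp Require Import all_boot all_order all_algebra all_fingroup.

Set Implicit Arguments.
Unset Strict Implicit.
Unset Printing Implicit Defensive.

Import GRing.Theory.

Record digraph := Digraph {
  vtx : finType;
  edg : finType;
  dorg : edg -> vtx;
  dter : edg -> vtx }.

Definition derived (X : digraph) (G : finGroupType) (alpha : edg X -> G)
  : digraph :=
  @Digraph (vtx X * G)%type (edg X * G)%type
    (fun e => (dorg e.1, e.2))
    (fun e => (dter e.1, (e.2 * alpha e.1)%g)).

Definition lorb (T : finType) (G : finGroupType) (H : {set G}) (x : T * G)
  : {set T * G} := [set (x.1, (h * x.2)%g) | h in H].

Definition orbT (T : finType) (G : finGroupType) (H : {set G}) :=
  {A : {set T * G} | A \in codom (lorb H)}.

Definition orbq (T : finType) (G : finGroupType) (H : {set G}) (x : T * G)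
  : orbT T H := exist _ (lorb H x) (codom_f (lorb H) x).

Definition orbrep (T : finType) (G : finGroupType) (H : {set G})
  (A : orbT T H) : T * G := iinv (valP A).

(* Quotient digraph Y_H of Y = X(G, alpha) by H acting on the left:
   vertices = H-orbits of vertices, edges = H-orbits of edges,
   o([e]) = [o(e)], t([e]) = [t(e)] (well defined since G acts by
   digraph automorphisms). *)
Definition derived_quot (X : digraph) (G : finGroupType) (alpha : edg X -> G)
  (H : {set G}) : digraph :=
  @Digraph (orbT (vtx X) H) (orbT (edg X) H)
    (fun E => orbq H (@dorg (derived alpha) (orbrep E)))
    (fun E => orbq H (@dter (derived alpha) (orbrep E))).

Local Open Scope ring_scope.

(* Z V_W = {ffun vtx W -> int}; A_W is the linear extension of
   w |-> sum_{o(eps) = w} t(eps). *)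
Definition adjop (W : digraph) (f : {ffun vtx W -> int}) : {ffun vtx W -> int} :=
  [ffun u => \sum_(w : vtx W) f w * \sum_(e : edg W | dorg e == w) (dter e == u)%:R].

(* "coker L is isomorphic to Q" as Z-modules, via the first isomorphism
   theorem: there is a surjective Z-module morphism N -> Q whose kernel is
   exactly the image of L. *)
Definition coker_iso (M N Q : zmodType) (L : M -> N) : Prop :=
  exists phi : N -> Q,
    [/\ forall x y, phi (x + y) = phi x + phi y,
        forall z, exists y, phi y = z
      & forall y, phi y = 0 <-> exists x, y = L x].

Definition BF_iso (W : digraph) (Q : zmodType) : Prop :=
  @coker_iso {ffun vtx W -> int} {ffun vtx W -> int} Q (fun f => f - adjop f).

(* Delta = Gal(Q(zeta_p)/Q), identified with (Z/pZ)^x via the cyclotomic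
   character: sigma_i <-> i mod p. *)
Definition Delta (p : nat) : finGroupType := {unit 'Z_p}.

Definition sigma (p i : nat) : Delta p := insubd (1%g : {unit 'Z_p}) (i%:R : 'Z_p).

Definition jconj (p : nat) : Delta p := sigma p p.-1.

(* Edges of the bouquet X: e_0 (None) and e_{i,k}, 1 <= k <= i <= p-1. *)
Definition edgeX (p : nat) : finType :=
  option {ik : 'I_p * 'I_p | (0 < ik.2 <= ik.1)%N}.

Definition bouquetX (p : nat) : digraph :=
  @Digraph unit (edgeX p) (fun _ => tt) (fun _ => tt).

Definition alphaX (p : nat) (e : edg (bouquetX p)) : Delta p :=
  match e with
  | None => sigma p 1
  | Some ik => ((sigma p (val ik).1)^-1)%g
  end.

Definition Y (p : nat) : digraph := derived (@alphaX p).

Definition Yplus (p : nat) : digraph := derived_quot (@alphaX p) <[jconj p]>%g.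

From mathcomp Require Import all_boot all_order all_algebra all_fingroup.
From mathcomp Require Import all_solvable zify.

(* From a vertex [s] of Y^+, the loop e_0 returns to [s], and the i edges
   e_{i,k} (1 <= k <= i) all end at [s sigma_i^-1], which is a given vertex [t]
   exactly when sigma_i is t^-1 s or j t^-1 s, i.e. for i = a and i = p - a
   where sigma_a = t^-1 s.  So [s] has p edges to every vertex besides the
   loop, I - A = -p J with J the all-ones matrix on the (p - 1)/2 vertices, and
   the cokernel of -p J is read off by
   f |-> ((f v - f v0)_(v <> v0), f v0 mod p). *)

Set Implicit Arguments.
Unset Strict Implicit.
Unset Printing Implicit Defensive.

Import GRing.Theory.

Section ConstantSumCokernel.

Local Open Scope ring_scope.

Lemma coker_iso_ext (M N Q : zmodType) (L L' : M -> N) :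
  L =1 L' -> coker_iso Q L -> coker_iso Q L'.
Proof.
move=> eqL [phi [phiD phi_surj phi_ker]]; exists phi; split=> // y.
by rewrite phi_ker; split=> -[x ->]; exists x; rewrite eqL.
Qed.

Lemma intr_Zp_eq0 (d : nat) (z : int) :
  (1 < d)%N -> ((z%:~R : 'Z_d) == 0) = (d %| z)%Z.
Proof.
move=> d_gt1; have natr_eq0 n : ((n%:R : 'Z_d) == 0) = (d %| n)%N.
  by rewrite -val_eqE /= val_Zp_nat.
by case: z => n; rewrite ?NegzE ?mulrNz ?oppr_eq0 dvdzE ?abszN natr_eq0.
Qed.

Variables (V : finType) (m d : nat) (e : option 'I_m -> V).
Hypotheses (e_bij : bijective e) (d_gt1 : (1 < d)%N).

Definition const_sum_coker (f : {ffun V -> int}) : ('rV[int]_m * 'Z_d)%type :=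
  (\row_k (f (e (Some k)) - f (e None)), (f (e None))%:~R).

Lemma coker_const_sum :
  coker_iso ('rV[int]_m * 'Z_d)%type
    (fun f : {ffun V -> int} => [ffun _ : V => - (d%:R * \sum_(v : V) f v)]).
Proof.
have [e' eK e'K] := e_bij.
exists const_sum_coker; split.
- move=> f g; congr (_, _); last by rewrite ffunE intrD.
  by apply/matrixP=> i k; rewrite !mxE !ffunE addrACA opprD.
- case=> r z; pose c : int := (z : nat)%:Z.
  pose f := [ffun v => if e' v is Some k then r ord0 k + c else c].
  exists f; rewrite /const_sum_coker !ffunE !eK /c -pmulrn natr_Zp.
  by congr (_, _); apply/matrixP=> i k; rewrite !mxE ffunE eK addrK (ord1 i).
- move=> y; split=> [[/matrixP y_const y0]|[x ->]]; last first.
    congr (_, _); first by apply/matrixP=> i k; rewrite !mxE !ffunE subrr.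
    by rewrite ffunE intrN intrM natz -pmulrn pchar_Zp // mul0r oppr0.
  have /dvdzP[K yK] : (d %| y (e None))%Z by rewrite -intr_Zp_eq0 // y0.
  exists [ffun v => if v == e None then - K else 0].
  apply/ffunP=> v; rewrite !ffunE (bigD1 (e None)) //= big1 => [|w /negbTE w_ne].
    rewrite ffunE eqxx addr0 mulrN opprK mulrC natz -yK -(e'K v).
    case: (e' v) => // k; apply/eqP; rewrite -subr_eq0.
    by have := y_const ord0 k; rewrite !mxE => ->.
  by rewrite ffunE w_ne.
Qed.

End ConstantSumCokernel.

Section Orbits.

Variables (T : finType) (G : finGroupType) (H : {group G}).
Implicit Types x y z : T * G.

Lemma mem_lorb x y : (y \in lorb H x) = (y.1 == x.1) && (y.2 * x.2^-1 \in H)%g.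
Proof.
apply/imsetP/andP => [[h hH ->]|[/eqP y1 y2]] /=; first by rewrite eqxx mulgK.
by exists (y.2 * x.2^-1)%g; rewrite // mulgKV -y1; case: y {y1 y2}.
Qed.

Lemma lorb_id x : x \in lorb H x.
Proof. by rewrite mem_lorb eqxx mulgV group1. Qed.

Lemma lorb_trans x y : y \in lorb H x -> lorb H y = lorb H x.
Proof.
rewrite mem_lorb => /andP[/eqP y1 y2]; apply/setP => z; rewrite !mem_lorb y1.
have -> : (z.2 * x.2^-1 = z.2 * y.2^-1 * (y.2 * x.2^-1))%g.
  by rewrite mulgA mulgKV.
by rewrite (groupMr _ y2).
Qed.

Lemma orbqE x y : (orbq H x == orbq H y) = (x \in lorb H y).
Proof.
apply/eqP/idP => [/(congr1 val) /= <-|/lorb_trans xy]; first exact: lorb_id.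
exact: val_inj.
Qed.

Lemma orbrepK : cancel (@orbrep T G H) (orbq H).
Proof. by move=> A; apply: val_inj; rewrite /= /orbrep f_iinv. Qed.

Lemma orbrep_orbq x : orbrep (orbq H x) \in lorb H x.
Proof. by rewrite -orbqE orbrepK. Qed.

Lemma orbq_eq_fst (a b : T) (s : G) : (orbq H (a, s) == orbq H (b, s)) = (a == b).
Proof. by rewrite orbqE mem_lorb mulgV group1 andbT. Qed.

Lemma orbq_fst_orbrep (a : T) (s : G) : (orbrep (orbq H (a, s))).1 = a.
Proof. by have := orbrep_orbq (a, s); rewrite mem_lorb => /andP[/eqP]. Qed.

End Orbits.

Section DerivedQuotient.

Variables (X : digraph) (G : finGroupType) (alpha : edg X -> G) (H : {group G}).
Local Notation Q := (derived_quot alpha H).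

Lemma orbrep_pair (T : finType) (a : T) (s : G) :
  exists2 h, h \in H & orbrep (orbq H (a, s)) = (a, h * s)%g.
Proof.
have := orbrep_orbq H (a, s); rewrite mem_lorb /=.
case: (orbrep _) => b t /andP[/= /eqP -> tsH].
by exists (t * s^-1)%g; rewrite ?mulgKV.
Qed.

Lemma dorg_quot (e : edg X) (s : G) :
  @dorg Q (orbq H (e, s)) = orbq H (dorg e, s).
Proof.
have [h hH rep] := orbrep_pair e s; apply/eqP.
by rewrite /= rep orbqE mem_lorb /= eqxx mulgK.
Qed.

Lemma dter_quot (e : edg X) (s : G) :
  @dter Q (orbq H (e, s)) = orbq H (dter e, s * alpha e)%g.
Proof.
have [h hH rep] := orbrep_pair e s; apply/eqP.
by rewrite /= rep orbqE mem_lorb /= eqxx invMg mulgA mulgK mulgK.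
Qed.

Lemma big_dorg_quot (R : Type) (idx : R) (op : Monoid.com_law idx)
    (v : vtx X) (s : G) (F : edg Q -> R) :
  \big[op/idx]_(E : edg Q | dorg E == orbq H (v, s)) F E =
  \big[op/idx]_(e : edg X | dorg e == v) F (orbq H (e, s)).
Proof.
rewrite (reindex_onto (fun e => orbq H (e, s)) (fun E => (orbrep E).1)).
  apply: eq_bigl => e.
  by rewrite dorg_quot orbq_eq_fst orbq_fst_orbrep eqxx andbT.
move=> E; rewrite -[E in _ = E]orbrepK /=; case: (orbrep E) => a t /=.
rewrite orbqE mem_lorb => /andP[_ tsH]; apply/eqP.
by rewrite orbqE mem_lorb eqxx -groupV invMg invgK.
Qed.

End DerivedQuotient.

Lemma big_option (R : Type) (idx : R) (op : Monoid.com_law idx)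
    (T : finType) (F : option T -> R) :
  \big[op/idx]_(x : option T) F x = op (F None) (\big[op/idx]_(y : T) F (Some y)).
Proof.
rewrite (bigD1 None) //= (reindex_omap Some id) => [|[] //].
by congr (op _ _); apply: eq_bigl => y; rewrite eqxx.
Qed.

Lemma sum_pairs_le n (c : 'I_n -> nat) :
  \sum_(x : {ik : 'I_n * 'I_n | 0 < ik.2 <= ik.1}) c (val x).1 =
  \sum_(i < n) c i * i.
Proof.
transitivity (\sum_(ik : 'I_n * 'I_n | 0 < ik.2 <= ik.1) c ik.1).
  rewrite (reindex_omap (val : {ik : 'I_n * 'I_n | 0 < ik.2 <= ik.1} -> _) insub).
    by apply: eq_bigl => -[ik ik_le] /=; rewrite ik_le insubT /= eqxx.
  by move=> ik ik_le; rewrite insubT.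
rewrite -(pair_big_dep xpredT (fun i k : 'I_n => 0 < k <= i) (fun i _ => c i)).
apply: eq_bigr => i _; rewrite sum_nat_const mulnC -sum1_card; congr (_ * _).
rewrite (eq_bigl (fun k : 'I_n => 0 < k < i.+1)) //.
rewrite (big_ord_narrow_cond (ltn_ord i)).
by rewrite big_mkcond big_ord_recl /= add0n sum1_card card_ord.
Qed.

Section OddPrime.

Variable q : nat.
Local Notation p := q.+2.
Hypotheses (p_pr : prime p) (p_odd : odd p).
Local Notation j := (jconj p).

Definition residue (g : Delta p) : nat := val (val g).

Lemma residue_inj : injective residue.
Proof. by move=> g h /val_inj/val_inj. Qed.

Lemma residue_lt (g : Delta p) : residue g < p.
Proof. exact: ltn_ord. Qed.

Lemma residue_gt0 (g : Delta p) : 0 < residue g.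
Proof.
rewrite lt0n; apply: contraTneq (valP g) => g0.
by rewrite (_ : val g = 0%R) ?GRing.unitr0 //; apply: val_inj.
Qed.

Lemma residue_sigma i : 0 < i < p -> residue (sigma p i) = i.
Proof.
case/andP=> i_gt0 i_lt_p; rewrite /residue /sigma insubdK.
  by rewrite Zp_nat /= modn_small.
rewrite unitZpE // prime_coprime //; apply: contraTN i_lt_p => /dvdn_leq.
by rewrite -leqNgt; apply.
Qed.

Lemma sigma_residue (g : Delta p) : sigma p (residue g) = g.
Proof. by apply: residue_inj; rewrite residue_sigma ?residue_gt0 ?residue_lt. Qed.

Lemma sigma1 : sigma p 1 = 1%g.
Proof. by apply: residue_inj; rewrite residue_sigma. Qed.

Lemma residue_jM (g : Delta p) : residue (j * g)%g = p - residue g.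
Proof.
have g_gt0 := residue_gt0 g; have g_lt := residue_lt g.
have -> : residue (j * g)%g = (residue j * residue g) %% p by [].
rewrite residue_sigma; last by lia.
have -> : q.+1 * residue g = (residue g).-1 * p + (p - residue g) by nia.
by rewrite modnMDl modn_small //; lia.
Qed.

Lemma jMj : (j * j = 1)%g.
Proof.
have residue1 : residue 1%g = 1 by [].
by apply: residue_inj; rewrite residue_jM -[j]mulg1 residue_jM residue1; lia.
Qed.

Lemma residue_jM_neq (g : Delta p) : residue (j * g)%g != residue g.
Proof.
by rewrite residue_jM; apply/eqP; have := residue_lt g; move: p_odd; lia.
Qed.

Lemma cycle_j : <[j]>%g = [set 1; j]%g.
Proof.
apply: cycle2g; have: #[j]%g %| 2 by rewrite order_dvdn expgS expg1 jMj.
have: #[j]%g != 1.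
  by rewrite order_eq1; apply: contraNneq (residue_jM_neq 1) => ->.
by case: #[j]%g => [|[|[|n]]].
Qed.

Lemma orbq_tt_eq (g h : Delta p) :
  (orbq <[j]>%g (tt, g) == orbq <[j]>%g (tt, h)) = (g == h) || (g == j * h)%g.
Proof.
rewrite (@orbqE _ _ <[j]>%G) mem_lorb /= cycle_j !inE -eq_mulgV1; congr (_ || _).
by apply/eqP/eqP => [<-|->]; rewrite ?mulgKV ?mulgK.
Qed.

Lemma sum_sigma_mem (S : {set Delta p}) :
  \sum_(i < p) (sigma p i \in S) * i = \sum_(g in S) residue g.
Proof.
rewrite (bigD1 ord0) //= muln0 add0n [RHS]big_mkcond.
rewrite (reindex_onto (fun g => Ordinal (residue_lt g)) (fun i => sigma p i)) /=.
  apply: eq_big => [g|g _]; rewrite sigma_residue.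
    by rewrite eqxx andbT -val_eqE /= -lt0n residue_gt0.
  by case: (g \in S); rewrite ?mul1n.
by move=> i i_neq0; apply: val_inj; rewrite /= residue_sigma // lt0n i_neq0 /=.
Qed.

Lemma sum_residue_pair (x : Delta p) : \sum_(g in [set x; j * x]%g) residue g = p.
Proof.
rewrite big_setU1 ?big_set1 ?residue_jM /=; first by have := residue_lt x; lia.
by rewrite inE; apply: contra (residue_jM_neq x) => /eqP <-.
Qed.

Lemma Yplus_vtxE (w : vtx (Yplus p)) : w = orbq <[j]>%g (tt, (orbrep w).2).
Proof. by rewrite -[w in LHS]orbrepK; case: (orbrep w) => [[] g]. Qed.

Lemma Yplus_out_edges (w u : vtx (Yplus p)) :
  \sum_(E : edg (Yplus p) | dorg E == w) (dter E == u) = (w == u) + p.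
Proof.
rewrite (Yplus_vtxE w); set s := (orbrep w).2.
rewrite (@big_dorg_quot _ _ _ <[j]>%G) (eq_bigl xpredT) //.
under eq_bigr => e _ do rewrite dter_quot.
rewrite big_option /= sigma1 mulg1; congr (_ + _).
rewrite (sum_pairs_le (fun i => orbq <[j]>%g (tt, s * (sigma p i)^-1)%g == u)).
rewrite (Yplus_vtxE u); set t := (orbrep u).2.
rewrite -[in RHS](sum_residue_pair (t^-1 * s)) -sum_sigma_mem.
apply: eq_bigr => i _.
have mulV_eq x y : (s * x^-1 == y)%g = (x == y^-1 * s)%g.
  by apply/eqP/eqP => [<-|->]; rewrite invMg invgK ?mulgKV ?mulKVg.
have jV : (j^-1 = j)%g by apply/eqP; rewrite eq_invg_mul jMj.
by rewrite orbq_tt_eq !inE !mulV_eq invMg jV mulgA (unit_Zp_mulgC t^-1%g j).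
Qed.

Lemma Yplus_adjop (f : {ffun vtx (Yplus p) -> int}) :
  (f - adjop f = [ffun _ => - (p%:R * \sum_w f w)])%R.
Proof.
apply/ffunP => u; rewrite !ffunE.
under eq_bigr => w _ do rewrite -natr_sum Yplus_out_edges natrD mulrDr.
rewrite big_split /= -big_distrl /= (bigD1 u) //= eqxx mulr1 big1 => [|w /negbTE ->].
  by rewrite addr0 opprD addrA subrr add0r mulrC.
by rewrite mulr0.
Qed.

Definition Yplus_index (c : option 'I_((p - 3)./2)) : nat :=
  if c is Some k then k.+2 else 1.

Definition Yplus_vtx c : vtx (Yplus p) :=
  orbq <[j]>%g (tt, sigma p (Yplus_index c)).

Lemma Yplus_index_range c : 0 < Yplus_index c /\ 2 * Yplus_index c < p.
Proof. by case: c => [k|] /=; [have := ltn_ord k|]; move: p_odd; lia. Qed.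

Lemma Yplus_index_onto r : 0 < r -> 2 * r < p -> exists c, Yplus_index c = r.
Proof.
case: r => [|[_ _|k _ k_lt]] //; first by exists None.
have k_lt' : k < (p - 3)./2 by move: p_odd; lia.
by exists (Some (Ordinal k_lt')).
Qed.

Lemma orbq_sigma_eq a b : 0 < a < p -> 0 < b < p ->
  (orbq <[j]>%g (tt, sigma p a) == orbq <[j]>%g (tt, sigma p b)) =
  (a == b) || (a == p - b).
Proof.
move=> a_lt b_lt.
by rewrite orbq_tt_eq -!(inj_eq residue_inj) residue_jM !residue_sigma.
Qed.

Lemma Yplus_vtx_inj : injective Yplus_vtx.
Proof.
move=> c c'; have [c0 c_lt] := Yplus_index_range c.
have [c'0 c'_lt] := Yplus_index_range c'.
move/eqP; rewrite orbq_sigma_eq; [|lia|lia].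
case/orP=> /eqP; last by lia.
by case: c c' {c0 c_lt c'0 c'_lt} => [k|] [k'|] //= [/val_inj ->].
Qed.

Lemma Yplus_vtx_surj w : exists c, w = Yplus_vtx c.
Proof.
set g := (orbrep w).2; have g0 := residue_gt0 g; have g_lt := residue_lt g.
have [c c_r] : exists c, Yplus_index c = minn (residue g) (p - residue g).
  by apply: Yplus_index_onto; move: p_odd; lia.
exists c; rewrite (Yplus_vtxE w) -/g -(sigma_residue g) /Yplus_vtx c_r; apply/eqP.
rewrite orbq_sigma_eq; [|lia|lia].
by case: leqP; lia.
Qed.

Lemma Yplus_vtx_bij : bijective Yplus_vtx.
Proof.
apply: inj_card_bij Yplus_vtx_inj _; rewrite -(card_codom Yplus_vtx_inj).
apply/subset_leq_card/subsetP => w _.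
by have [c ->] := Yplus_vtx_surj w; apply: codom_f.
Qed.

End OddPrime.

Theorem proposition5p4 (p : nat) (pp : prime p) (podd : odd p) :
  BF_iso (Yplus p) ('rV[int]_((p - 3)./2) * 'Z_p)%type.
Proof.
case: p pp podd => [|[|q]] // p_pr p_odd.
apply: (coker_iso_ext (fun f => esym (Yplus_adjop p_pr p_odd f))).
exact: coker_const_sum (Yplus_vtx_bij p_pr p_odd) (prime_gt1 p_pr).
Qed.
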